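(* Let $\mathcal{G}=(\mathcal{V},\mathcal{E})$ be a finite, connected, unweighted, undirected graph, let $u,v\in\mathcal{V}$, and let $k\ge 1$. Suppose the $k$-hop ego-graphs $\mathcal{B}(u,k)$ and $\mathcal{B}(v,k)$ are not isomorphic as rooted graphs, with roots $u$ and $v$ respectively. Let $m$ be the maximum of the numbers of edges of $\mathcal{B}(u,k)$ and $\mathcal{B}(v,k)$. Then there is a length $l=O(m)$ such that the distribution of anonymous paths of length-$l$ random walks started at $u$ differs from the distribution of anonymous paths of length-$l$ random walks started at $v$.
   Context: The $k$-hop ego-graph $\mathcal{B}(v,k)$ is the subgraph of $\mathcal{G}$ induced by all nodes at shortest-path distance at most $k$ from $v$; it is rooted at $v$. A random walk of length $l$ started at $v$ is a node sequence $w=(v_0,\dots,v_l)$ with $v_0=v$ and $P(v_{i+1}\mid v_0,\dots,v_i)=\mathbb{1}[(v_i,v_{i+1})\in\mathcal{E}]/D(v_i)$, where $D(v_i)$ is the degree of $v_i$. The anonymous path of $w$ is $\phi=(\gamma_0,\dots,\gamma_l)$ with $\gamma_i=\min\{j: v_j=v_i\}$. Thus $\gamma_i$ is the first position in $w$ at which node $v_i$ occurs. *)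

(* Simple graphs as symmetric irreflexive relations on a finType. *)
From HB Require Import structures.
From mathcomp Require Import all_boot all_order all_algebra.
Set Implicit Arguments. Unset Strict Implicit. Unset Printing Implicit Defensive.
Import Order.TTheory GRing.Theory Num.Theory.

Section Defs.
Variables (T : finType) (e : rel T).

(* node set of the k-hop ego-graph B(v,k): nodes x reachable from v by a walk
   of length n <= k, i.e. shortest-path distance d(v,x) <= k *)
Definition ball (v : T) (k : nat) : {set T} :=
  [set x | [exists n : 'I_k.+1,
              [exists p : (val n).-tuple T, path e v p && (last v p == x)]]].

Definition rooted_iso (u v : T) (k : nat) : Prop :=
  exists f : T -> T,
    [/\ f u = v,
        {in ball u k &, injective f},
        {in ball u k, forall x, f x \in ball v k},
        (forall y, y \in ball v k -> exists2 x, x \in ball u k & f x = y) &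
        {in ball u k &, forall x y, e x y = e (f x) (f y)}].

(* number of (undirected) edges of B(v,k): ordered adjacent pairs halved *)
Definition nedges (v : T) (k : nat) : nat :=
  (#|[set p : T * T | [&& p.1 \in ball v k, p.2 \in ball v k & e p.1 p.2]]|)./2.

Definition deg (x : T) : nat := #|[set y | e x y]|.

Fixpoint walk_prob (x : T) (w : seq T) : rat :=
  match w with
  | [::] => 1
  | y :: w' => ((e x y)%:R / (deg x)%:R) * walk_prob y w'
  end%R.

Definition anon (w : seq T) : seq nat := [seq index x w | x <- w].

Definition anon_dist (v : T) (l : nat) (phi : seq nat) : rat :=
  (\sum_(w : l.-tuple T | anon (v :: w) == phi) walk_prob v w)%R.

End Defs.

From mathcomp Require Import all_boot all_order all_algebra zify.
Set Implicit Arguments. Unset Strict Implicit. Unset Printing Implicit Defensive.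
Import Order.TTheory GRing.Theory Num.Theory.

(* Let W be a closed walk from v that traverses every edge of B(v,k) and has
   length at most twice the number of edges; it is built by splicing a detour
   x y x into the walk at a visited node x incident to an untraversed edge xy,
   then padded along an edge at v to the common even length l.  If the
   anonymous-path distributions from u and v agreed at l, the anonymous path of
   W would have positive probability from u, realised by some walk W'.
   Sending each node of W to the node of W' at the same first-occurrence
   position is then a well-defined, injective, edge-preserving map
   B(v,k) -> B(u,k) fixing the roots.  With such maps in both directions,
   counting nodes and arcs shows that either one is a rooted isomorphism. *)

Definition steps (T : Type) (x : T) (p : seq T) : seq (T * T) := pairmap pair x p.

Lemma steps_cat (T : Type) (x : T) p q :
  steps x (p ++ q) = steps x p ++ steps (last x p) q.
Proof. exact: pairmap_cat. Qed.

Lemma path_steps (T : Type) (r : rel T) x p :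
  path r x p = all (fun a => r a.1 a.2) (steps x p).
Proof. by elim: p x => [|y p IH] x //=; rewrite IH. Qed.

Lemma steps_map (T U : Type) (f : T -> U) x p :
  steps (f x) (map f p) = map (fun a => (f a.1, f a.2)) (steps x p).
Proof. by elim: p x => [|y p IH] x //=; rewrite IH. Qed.

Lemma mem_steps (T : eqType) (x : T) p a :
  a \in steps x p -> (a.1 \in x :: p) && (a.2 \in x :: p).
Proof.
elim: p x => [|y p IH] x //=; rewrite inE => /orP [/eqP -> | /IH].
  by rewrite !inE !eqxx orbT.
by rewrite !inE => /andP [-> ->]; rewrite !orbT.
Qed.

Lemma card_le_inj_in (aT rT : finType) (f : aT -> rT) (A : {set aT}) (B : {set rT}) :
  {in A &, injective f} -> {in A, forall x, f x \in B} -> #|A| <= #|B|.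
Proof.
move=> finj fAB; rewrite -(card_in_imset finj); apply: subset_leq_card.
by apply/subsetP => _ /imsetP [x hx ->]; exact: fAB.
Qed.

Lemma imset_inj_in_eq (aT rT : finType) (f : aT -> rT) (A : {set aT}) (B : {set rT}) :
  {in A &, injective f} -> {in A, forall x, f x \in B} -> #|B| <= #|A| -> f @: A = B.
Proof.
move=> finj fAB hBA; apply/eqP; rewrite eqEcard card_in_imset // hBA andbT.
by apply/subsetP => _ /imsetP [x hx ->]; exact: fAB.
Qed.

Section Ball.
Variables (T : finType) (e : rel T).

Lemma ballP v k x :
  reflect (exists2 p : seq T, size p <= k & path e v p /\ last v p = x)
          (x \in ball e v k).
Proof.
rewrite inE; apply: (iffP existsP) => [[n /existsP [p /andP [hp /eqP hl]]] | [p hs [hp hl]]].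
  by exists p; rewrite // size_tuple -ltnS ltn_ord.
exists (Ordinal (hs : size p < k.+1)); apply/existsP; exists (in_tuple p).
by rewrite hp hl eqxx.
Qed.

Lemma walk_in_ball v k p :
  size p <= k -> path e v p -> {subset v :: p <= ball e v k}.
Proof.
move=> hs hp x; rewrite inE => /predU1P [-> | hx]; first by apply/ballP; exists [::].
case/splitPr: hx hs hp => p1 p2; rewrite -cat_rcons size_cat cat_path => hs /andP [hp _].
by apply/ballP; exists (rcons p1 x); rewrite ?last_rcons //; exact: leq_trans (leq_addr _ _) hs.
Qed.

Definition ball_arcs v k : {set T * T} :=
  [set a | [&& a.1 \in ball e v k, a.2 \in ball e v k & e a.1 a.2]].

Lemma in_ball_arcs v k a :
  (a \in ball_arcs v k) = [&& a.1 \in ball e v k, a.2 \in ball e v k & e a.1 a.2].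
Proof. by rewrite inE. Qed.

Definition traversed v W : {set T * T} :=
  [set a | (a \in steps v W) || ((a.2, a.1) \in steps v W)].

Hypothesis e_sym : symmetric e.
Hypothesis e_irr : irreflexive e.

Lemma traversed_sub_ball_arcs v k W :
  all (mem (ball_arcs v k)) (steps v W) -> traversed v W \subset ball_arcs v k.
Proof.
move=> /allP hW; apply/subsetP => -[a b]; rewrite inE => /orP [/hW // | /hW].
by rewrite !inE /= e_sym => /and3P [-> -> ->].
Qed.

Lemma untraversed_step_from_walk v k W x0 q :
  x0 \in v :: W -> {subset x0 :: q <= ball e v k} -> path e x0 q ->
  has (fun a => a \notin traversed v W) (steps x0 q) ->
  exists x y, [/\ x \in v :: W, (x, y) \in ball_arcs v k & (x, y) \notin traversed v W].
Proof.
elim: q x0 => [|y q IH] x0 //= hx0 hq /andP [exy hp] hnt.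
have hxy : (x0, y) \in ball_arcs v k by rewrite inE /= !hq ?exy // !inE eqxx ?orbT.
case: (boolP ((x0, y) \in traversed v W)) => [ht | hn]; last by exists x0, y.
move: hnt; rewrite ht /= => hnt.
apply: IH hp hnt => [|z hz]; last by apply: hq; rewrite inE hz orbT.
by move: ht; rewrite [_ \in traversed _ _]inE => /orP [] /mem_steps /andP [].
Qed.

Lemma untraversed_arc_from_walk v k W :
  ~~ (ball_arcs v k \subset traversed v W) ->
  exists x y, [/\ x \in v :: W, (x, y) \in ball_arcs v k & (x, y) \notin traversed v W].
Proof.
case/subsetPn => -[a b]; rewrite inE /= => /and3P [ha hb eab] hn.
case/ballP: ha => p hs [hp hl].
apply: (untraversed_step_from_walk (q := rcons p b)); first exact: mem_head.
- move=> z; rewrite -rcons_cons mem_rcons inE => /predU1P [-> // | ].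
  exact: walk_in_ball.
- by rewrite rcons_path hp hl.
- by apply/hasP; exists (a, b); rewrite // -cats1 steps_cat hl mem_cat mem_head orbT.
Qed.

(* The length bound is what keeps the final walk length linear in the number
   of edges. *)
Definition short_tour v k W :=
  [/\ path e v W, last v W = v, ~~ odd (size W), size W <= #|traversed v W|
    & all (mem (ball_arcs v k)) (steps v W)].

Lemma short_tour_detour v k W x y :
  short_tour v k W -> x \in v :: W -> (x, y) \in ball_arcs v k ->
  (x, y) \notin traversed v W ->
  exists2 W', short_tour v k W' & #|traversed v W| < #|traversed v W'|.
Proof.
move=> [hp hl hev hsz hall] hx hxy hn.
case/splitPl: W / hx hp hl hev hsz hall hn => p1 p2 hx hp hl hev hsz hall hn.
have exy : e x y by move: hxy; rewrite inE => /and3P [].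
have hyx : (y, x) \notin traversed v (p1 ++ p2) by move: hn; rewrite !inE orbC.
have hne : (x, y) != (y, x) by apply/eqP => -[exy']; rewrite exy' e_irr in exy.
have htr : traversed v (p1 ++ y :: x :: p2) = (x, y) |: ((y, x) |: traversed v (p1 ++ p2)).
  apply/setP => -[a b]; rewrite !inE !steps_cat hx /= !mem_cat !inE /= !xpair_eqE.
  by do ![case: (_ == _) | case: (_ \in _)].
have hcard : #|traversed v (p1 ++ y :: x :: p2)| = #|traversed v (p1 ++ p2)|.+2.
  by rewrite htr !cardsU1 in_setU1 (negbTE hne) (negbTE hn) (negbTE hyx).
exists (p1 ++ y :: x :: p2); rewrite ?hcard //; split.
- by move: hp; rewrite !cat_path hx /= exy e_sym exy.
- by move: hl; rewrite !last_cat hx.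
- by move: hev; rewrite !size_cat /= !addnS negbK.
- by rewrite hcard; move: hsz; rewrite !size_cat /= !addnS.
- move: hall; rewrite !steps_cat hx /= !all_cat /= => /andP [-> ->].
  by rewrite hxy inE /= e_sym; move: hxy; rewrite inE => /and3P [-> -> ->].
Qed.

Lemma exists_covering_tour v k :
  exists2 W, short_tour v k W & ball_arcs v k \subset traversed v W.
Proof.
suff cover n W : short_tour v k W -> #|ball_arcs v k| - #|traversed v W| < n ->
    exists2 W', short_tour v k W' & ball_arcs v k \subset traversed v W'.
  by apply: (cover _ [::]) (ltnSn _); split.
elim: n W => [//|n IH] W hW hn.
case: (boolP (ball_arcs v k \subset traversed v W)) => [hcov | hncov]; first by exists W.
have [x [y [hx hxy hnt]]] := untraversed_arc_from_walk hncov.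
have [W' hW' hlt] := short_tour_detour hW hx hxy hnt.
apply: (IH W' hW'); have [_ _ _ _ hall'] := hW'.
have := subset_leq_card (traversed_sub_ball_arcs hall').
move: hn; lia.
Qed.

Lemma covering_walk v k y l :
  e v y -> ~~ odd l -> #|ball_arcs v k| <= l ->
  exists W, [/\ path e v W, size W = l & ball_arcs v k \subset traversed v W].
Proof.
move=> evy hl hEl; have [W [hp hlast hev hsz hall] hcov] := exists_covering_tour v k.
have hWl : size W <= l.
  exact: leq_trans hsz (leq_trans (subset_leq_card (traversed_sub_ball_arcs hall)) hEl).
exists (W ++ flatten (nseq (l./2 - (size W)./2) [:: y; v])); split.
- rewrite cat_path hp hlast; elim: (_ - _) => //= j ->.
  by rewrite evy e_sym evy.
- rewrite size_cat size_flatten /shape map_nseq sumn_nseq.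
  have := odd_double_half l; have := odd_double_half (size W).
  rewrite (negbTE hl) (negbTE hev) !add0n -!muln2 /=; lia.
- apply: subset_trans hcov _; apply/subsetP => a.
  by rewrite !inE steps_cat !mem_cat => /orP [] ->; rewrite ?orbT.
Qed.

Lemma anon_relabel (s s' : seq T) x0 :
  anon s = anon s' -> map (fun x => nth x0 s' (index x s)) s = s'.
Proof.
move=> ha; have hs : size s = size s' by have := congr1 size ha; rewrite !size_map.
apply: (@eq_from_nth _ x0); rewrite size_map // => i hi.
have := congr1 (nth 0 ^~ i) ha; rewrite /anon !(nth_map x0) -?hs // => ->.
by rewrite nth_index // mem_nth -?hs.
Qed.

Lemma ball_sub_covering_walk v k W :
  ball_arcs v k \subset traversed v W -> {subset ball e v k <= v :: W}.
Proof.
move=> hcov x /[dup] hx /ballP [p hps [hp hl]].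
case/lastP: p hps hp hl => [_ _ <- | p z hps hp hl]; first exact: mem_head.
rewrite last_rcons in hl; subst z; move: hp; rewrite rcons_path => /andP [hp ex].
have hpk : size p <= k by move: hps; rewrite size_rcons; apply: ltnW.
have : (last v p, x) \in traversed v W.
  apply: (subsetP hcov); rewrite inE /= hx ex !andbT.
  exact: (walk_in_ball hpk hp (mem_last _ _)).
by rewrite [_ \in traversed _ _]inE => /orP [] /mem_steps /andP [].
Qed.

Definition ball_embedding u v k (f : T -> T) :=
  [/\ f u = v, {in ball e u k &, injective f},
      {in ball e u k, forall x, f x \in ball e v k} &
      {in ball e u k &, forall a b, e a b -> e (f a) (f b)}].

Lemma anon_embedding u v k W W' :
  ball_arcs v k \subset traversed v W -> path e u W' ->
  anon (v :: W) = anon (u :: W') -> exists f, ball_embedding v u k f.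
Proof.
move=> hcov hp' hanon; set s := v :: W; set s' := u :: W'.
pose f x := nth u s' (index x s); pose g x := nth v s (index x s').
have hfs : map f s = s' := anon_relabel u hanon.
have gK : {in s, cancel f g}.
  by apply/eq_in_map; rewrite map_comp hfs anon_relabel // map_id.
have fv : f v = u by rewrite /f /= eqxx.
have fW : map f W = W' by case: hfs.
have f_step c : c \in steps v W -> e (f c.1) (f c.2).
  move=> hc; move: hp'; rewrite path_steps => /allP /(_ (f c.1, f c.2)); apply.
  by rewrite -fv -fW steps_map; exact: (map_f (fun c => (f c.1, f c.2)) hc).
have f_edge : {in ball e v k &, forall a b, e a b -> e (f a) (f b)}.
  move=> a b ha hb hab.
  have : (a, b) \in traversed v W by apply: (subsetP hcov); rewrite inE /= ha hb hab.
  by rewrite inE => /orP [/f_step // | /f_step]; rewrite e_sym.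
have hsub := ball_sub_covering_walk hcov.
exists f; split=> // [a b ha hb hab | x /ballP [p hps [hp hl]]].
  by rewrite -(gK a (hsub _ ha)) -(gK b (hsub _ hb)) hab.
apply/ballP; exists (map f p); rewrite ?size_map //; split; last by rewrite -fv last_map hl.
rewrite -fv path_steps steps_map all_map; apply/allP => c hc /=.
have /andP [h1 h2] := mem_steps hc; have hin := walk_in_ball hps hp.
by apply: f_edge; rewrite ?hin //; move: hp; rewrite path_steps => /allP; apply.
Qed.

Lemma ball_embedding_arcs u v k f : ball_embedding u v k f ->
  {in ball_arcs u k &, injective (fun c => (f c.1, f c.2))} /\
  {in ball_arcs u k, forall c, (f c.1, f c.2) \in ball_arcs v k}.
Proof.
move=> [_ finj fball fedge]; split=> [[a b] [c d] | [a b]]; rewrite !in_ball_arcs /=.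
  move=> /and3P [ha hb _] /and3P [hc hd _] [fac fbd].
  by rewrite (finj _ _ ha hc fac) (finj _ _ hb hd fbd).
by move=> /and3P [ha hb hab]; rewrite !fball ?fedge.
Qed.

Lemma ball_embeddings_iso u v k f g :
  ball_embedding u v k f -> ball_embedding v u k g -> rooted_iso e u v k.
Proof.
move=> hf hg; have [fu finj fball fedge] := hf; have [_ ginj gball _] := hg.
have fonto : f @: ball e u k = ball e v k.
  exact: imset_inj_in_eq finj fball (card_le_inj_in ginj gball).
have [Finj Farcs] := ball_embedding_arcs hf; have [Ginj Garcs] := ball_embedding_arcs hg.
have Fonto := imset_inj_in_eq Finj Farcs (card_le_inj_in Ginj Garcs).
exists f; split=> // [y | a b ha hb].
  by rewrite -fonto => /imsetP [x hx ->]; exists x.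
apply/idP/idP => [|efab]; first exact: fedge.
have : (f a, f b) \in ball_arcs v k by rewrite in_ball_arcs /= !fball.
rewrite -Fonto => /imsetP [[c d]]; rewrite in_ball_arcs /= => /and3P [hc hd ecd] [fac fbd].
by rewrite (finj _ _ ha hc fac) (finj _ _ hb hd fbd).
Qed.

Lemma walk_prob_ge0 x w : (0 <= walk_prob e x w)%R.
Proof.
by elim: w x => [|y w IH] x /=; rewrite ?ler01 // mulr_ge0 // divr_ge0 // ler0n.
Qed.

Lemma walk_prob_gt0 x w : (0 < walk_prob e x w)%R = path e x w.
Proof.
elim: w x => [|y w IH] x /=; first exact: ltr01.
case exy: (e x y); last by rewrite mul0r mul0r ltxx.
have deg_gt0 : (0 < deg e x)%N by rewrite card_gt0; apply/set0Pn; exists y; rewrite inE.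
by rewrite pmulr_rgt0 ?IH // divr_gt0 // ltr0n.
Qed.

Lemma anon_dist_gt0 v l phi :
  (0 < anon_dist e v l phi)%R <->
  exists2 w : l.-tuple T, anon (v :: w) = phi & path e v w.
Proof.
split=> [hpos | [w hw hp]].
  have [/existsP [w /andP [/eqP hw hp]] | /existsPn hn] :=
    boolP [exists w : l.-tuple T, (anon (v :: w) == phi) && path e v w].
    by exists w.
  move: hpos; rewrite /anon_dist big1 ?ltxx // => w hw.
  apply/eqP; rewrite eq_le walk_prob_ge0 andbT leNgt walk_prob_gt0.
  by have := hn w; rewrite hw.
rewrite /anon_dist (bigD1 w) ?hw ?eqxx //= ltr_pwDl ?walk_prob_gt0 //.
by apply: sumr_ge0 => w' _; exact: walk_prob_ge0.
Qed.

Lemma anon_dist_embedding u v k W :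
  path e v W -> ball_arcs v k \subset traversed v W ->
  anon_dist e u (size W) (anon (v :: W)) = anon_dist e v (size W) (anon (v :: W)) ->
  exists f, ball_embedding v u k f.
Proof.
move=> hp hcov hdist.
have : (0 < anon_dist e u (size W) (anon (v :: W)))%R.
  by rewrite hdist; apply/anon_dist_gt0; exists (in_tuple W).
by case/anon_dist_gt0 => w' /esym hanon hp'; exact: anon_embedding hcov hp' hanon.
Qed.

Lemma card_ball_arcs_ge2 v k y : 0 < k -> e v y -> 2 <= #|ball_arcs v k|.
Proof.
move=> hk evy.
have hv : v \in ball e v k by apply/ballP; exists [::].
have hy : y \in ball e v k by apply/ballP; exists [:: y]; rewrite /= ?evy.
have hne : (v, y) != (y, v) by apply/eqP => -[vy]; rewrite vy e_irr in evy.
have : [set (v, y); (y, v)] \subset ball_arcs v k.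
  apply/subsetP => a; rewrite in_set2 => /orP [] /eqP ->;
  by rewrite in_ball_arcs /= hv hy ?evy // e_sym evy.
by move/subset_leq_card; rewrite cards2 hne.
Qed.
End Ball.

Lemma double_maxn_le_half a b : 1 < a -> 1 < b -> 2 * maxn a b <= 6 * maxn a./2 b./2.
Proof.
move=> ha hb; have := odd_double_half a; have := odd_double_half b.
by rewrite -!muln2; case: (odd a); case: (odd b); lia.
Qed.

Lemma neighbour_of_connect (T : finType) (e : rel T) u v :
  u != v -> connect e u v -> exists y, e u y.
Proof.
move=> huv /connectP [[|y p] /= hp hl]; first by rewrite hl eqxx in huv.
by case/andP: hp => euy _; exists y.
Qed.

Theorem proposition1 :
  exists C : nat,
  forall (T : finType) (e : rel T),
    symmetric e -> irreflexive e -> (forall x y : T, connect e x y) ->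
  forall (u v : T) (k : nat), 0 < k ->
    ~ rooted_iso e u v k ->
    exists l : nat,
      l <= C * maxn (nedges e u k) (nedges e v k) /\
      exists phi : seq nat, anon_dist e u l phi <> anon_dist e v l phi.
Proof.
exists 6 => T e e_sym e_irr e_conn u v k hk hniso.
case: (eqVneq u v) hniso => [<- | huv] hniso.
  by case: hniso; exists id; split=> // y; exists y.
have [yu euy] := neighbour_of_connect huv (e_conn u v).
have [yv evy] : exists y, e v y by apply: neighbour_of_connect (e_conn v u); rewrite eq_sym.
pose l := 2 * maxn #|ball_arcs e u k| #|ball_arcs e v k|.
have hl : ~~ odd l by rewrite oddM.
have hlu : #|ball_arcs e u k| <= l by exact: leq_trans (leq_maxl _ _) (leq_pmull _ _).
have hlv : #|ball_arcs e v k| <= l by exact: leq_trans (leq_maxr _ _) (leq_pmull _ _).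
have [Wu [hpu hszu hcovu]] := covering_walk e_sym e_irr euy hl hlu.
have [Wv [hpv hszv hcovv]] := covering_walk e_sym e_irr evy hl hlv.
exists l; split.
  rewrite /nedges -/(ball_arcs e u k) -/(ball_arcs e v k).
  exact: double_maxn_le_half (card_ball_arcs_ge2 e_sym e_irr hk euy)
                             (card_ball_arcs_ge2 e_sym e_irr hk evy).
pose phiv := anon (v :: Wv); pose phiu := anon (u :: Wu).
have [duv | ] := eqVneq (anon_dist e u l phiv) (anon_dist e v l phiv); last first.
  by move/eqP; exists phiv.
have [dvu | ] := eqVneq (anon_dist e v l phiu) (anon_dist e u l phiu); last first.
  by move/eqP => hne; exists phiu => /esym.
rewrite -hszv in duv; rewrite -hszu in dvu.
have [f hf] := anon_dist_embedding e_sym hpv hcovv duv.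
have [g hg] := anon_dist_embedding e_sym hpu hcovu dvu.
by case: hniso; exact: ball_embeddings_iso hg hf.
Qed.
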